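(* For $\alpha\in\mathbb N$ and $n\ge 0$, $$\det\left(1/F_{\alpha+i+j}\right)_{0\le i,j\le n}=\left((-1)^{\alpha\binom{n+1}{2}}F_\alpha\prod_{k=1}^nF_{\alpha+2k}\binom{\alpha+2k-1}{k}_{\mathbb F}^2\right)^{-1},$$ which is the reciprocal of an integer.
   Context: $F_n$ are the Fibonacci numbers ($F_0=0,F_1=1,F_{n+1}=F_n+F_{n-1}$). The Fibonomial coefficients are $\binom{n}{k}_{\mathbb F}=\prod_{i=1}^k F_{n-i+1}/F_i$ for $0\le k\le n$ (empty product $=1$). *)

From mathcomp Require Import all_boot all_order all_algebra.
Set Implicit Arguments. Unset Strict Implicit. Unset Printing Implicit Defensive.
Import GRing.Theory Num.Theory.

Fixpoint fib (n : nat) : nat :=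
  match n with
  | 0 => 0
  | 1 => 1
  | (m.+1 as p).+1 => fib p + fib m
  end.

Local Open Scope ring_scope.

Definition fibonomial (n k : nat) : rat :=
  \prod_(1 <= i < k.+1) ((fib (n - i + 1))%:R / (fib i)%:R).

From mathcomp Require Import all_boot all_order all_algebra.
From mathcomp Require Import ring zify.
Import GRing.Theory Num.Theory.
Local Open Scope ring_scope.

(* Since F_(a+i+j) = F_(i+1) F_(a+j) + F_i F_(a+j-1), the matrix (1 / F_(a+i+j)) is a
   Cauchy-type matrix (1 / (p_i q_j + r_i s_j)), and a Schur complement induction gives
   det = prod_(i<j) (r_i p_j - p_i r_j) (q_i s_j - s_i q_j) / prod_(i,j) (p_i q_j + r_i s_j).
   By d'Ocagne's identity each factor of the numerator is (-1)^a F_(j-i)^2.  Adding the row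
   and column of index n multiplies the denominator by F_(a+2n) (F_(a+n) ... F_(a+2n-1))^2
   and the numerator by (-1)^(an) (F_1 ... F_n)^2, whose ratio is the n-th factor of D
   because binom(a+2n-1, n)_F F_1 ... F_n = F_(a+n) ... F_(a+2n-1).  Integrality holds since
   the Fibonomials satisfy a Pascal rule with Fibonacci coefficients. *)

Section TriangleSquareProducts.
Variable R : comPzRingType.

Lemma prod_triangle_recl N (f : nat -> nat -> R) :
  \prod_(j < N.+1) \prod_(i < j) f i j =
  \prod_(j < N) f 0%N j.+1 * \prod_(j < N) \prod_(i < j) f i.+1 j.+1.
Proof.
rewrite big_ord_recl big_ord0 mul1r -big_split /=.
by apply: eq_bigr => j _; rewrite big_ord_recl.
Qed.

Lemma prod_triangle_recr N (f : nat -> nat -> R) :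
  \prod_(j < N.+1) \prod_(i < j) f i j =
  \prod_(j < N) \prod_(i < j) f i j * \prod_(i < N) f i N.
Proof. exact: big_ord_recr. Qed.

Lemma prod_square_recl N (f : nat -> nat -> R) :
  \prod_(i < N.+1) \prod_(j < N.+1) f i j =
  f 0%N 0%N * \prod_(j < N) f 0%N j.+1 *
  (\prod_(i < N) f i.+1 0%N * \prod_(i < N) \prod_(j < N) f i.+1 j.+1).
Proof.
rewrite big_ord_recl big_ord_recl -big_split /=.
by congr (_ * _ * _); apply: eq_bigr => i _; rewrite big_ord_recl.
Qed.

Lemma prod_square_recr N (f : nat -> nat -> R) :
  \prod_(i < N.+1) \prod_(j < N.+1) f i j =
  \prod_(i < N) \prod_(j < N) f i j * \prod_(i < N) f i N *
  (\prod_(j < N) f N j * f N N).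
Proof.
rewrite big_ord_recr /= -big_split /=; congr (_ * _); last exact: big_ord_recr.
by apply: eq_bigr => i _; rewrite big_ord_recr.
Qed.

Lemma prod_ord_rev1 m (g : nat -> R) :
  \prod_(i < m) g (m - i)%N = \prod_(1 <= i < m.+1) g i.
Proof.
rewrite big_nat_rev big_add1 /= big_mkord.
by apply: eq_bigr => i _; congr g; have := ltn_ord i; lia.
Qed.

End TriangleSquareProducts.

Section CauchyDeterminant.
Variable F : fieldType.

Lemma det_schur N (A : 'M[F]_(1 + N)) : A 0 0 != 0 ->
  \det A = A 0 0 * \det (\matrix_(i < N, j < N)
     (A (rshift 1 i) (rshift 1 j) - A (rshift 1 i) 0 * A 0 (rshift 1 j) / A 0 0)).
Proof.
move=> A00_neq0.
set W : 'M_(N, 1) := \matrix_(i, j) (A (rshift 1 i) 0 / A 0 0).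
set S := \matrix_(i < N, j < N) _.
have lshift0 : lshift N (0 : 'I_1) = 0 by apply: val_inj.
have A_factor : A = block_mx 1%:M 0 W 1%:M *m block_mx (ulsubmx A) (ursubmx A) 0 S.
  rewrite mulmx_block !mul1mx !mul0mx !addr0 ?add0r -[LHS]submxK.
  congr block_mx; apply/matrixP => i j; rewrite !mxE big_ord1 !mxE.
    by rewrite (ord1 j) lshift0 divfK.
  by rewrite lshift0 mulrAC addrC subrK.
rewrite [in LHS]A_factor det_mulmx det_lblock det_ublock !det1 !mul1r det_mx11.
by rewrite !mxE lshift0.
Qed.

Lemma det_cauchy N (p q r s : nat -> F) :
  (forall i j, p i * q j + r i * s j != 0) ->
  \det (\matrix_(i < N, j < N) (p i * q j + r i * s j)^-1) =
  \prod_(j < N) \prod_(i < j) ((r i * p j - p i * r j) * (q i * s j - s i * q j)) /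
  \prod_(i < N) \prod_(j < N) (p i * q j + r i * s j).
Proof.
elim: N p q r s => [|N IHN] p q r s e_neq0.
  by rewrite det_mx00 !big_ord0 invr1 mulr1.
pose e i j := p i * q j + r i * s j.
pose d i j := (r i * p j - p i * r j) * (q i * s j - s i * q j).
pose a i := (r 0%N * p i.+1 - p 0%N * r i.+1) / e i.+1 0%N.
pose b j := (q 0%N * s j.+1 - s 0%N * q j.+1) / e 0%N j.+1.
rewrite (@det_schur N) !mxE /=; last by rewrite invr_eq0.
(* The Schur complement is again of Cauchy type, up to row and column scalings, because
   e i 0 * e 0 j - e 0 0 * e i j = (r 0 * p i - p 0 * r i) * (q 0 * s j - s 0 * q j). *)
rewrite [X in \det X](_ : _ = diag_mx (\row_i a i) *m
    \matrix_(i < N, j < N) (e i.+1 j.+1)^-1 *m diag_mx (\row_j b j)); last first.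
  apply/matrixP => i j; rewrite mul_diag_mx mul_mx_diag !mxE /a /b /e.
  by field; rewrite !e_neq0 oner_eq0.
rewrite !det_mulmx !det_diag (IHN (fun k => p k.+1) (fun k => q k.+1)
  (fun k => r k.+1) (fun k => s k.+1));
  last by move=> i j; apply: e_neq0.
rewrite (eq_bigr (fun i : 'I_N => a i)) => [|i _]; last by rewrite mxE.
rewrite [X in _ * (_ * X)](eq_bigr (fun j : 'I_N => b j)) => [|j _]; last by rewrite mxE.
rewrite /a /b !prodf_div (prod_triangle_recl _ _ d) (prod_square_recl _ _ e) big_split /=.
have prod_e_neq0 (I : finType) (f g : I -> nat) : \prod_i e (f i) (g i) != 0.
  by apply/prodf_neq0 => i _; apply: e_neq0.
have prod2_e_neq0 : \prod_(i < N) \prod_(j < N) e i.+1 j.+1 != 0.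
  by apply/prodf_neq0 => i _; apply: prod_e_neq0.
rewrite /e; field.
by rewrite !prod_e_neq0 -/e prod2_e_neq0 e_neq0.
Qed.

End CauchyDeterminant.

(* Keeps [/=] from unfolding [fib k.+1] into a [match] on [k]. *)
Arguments fib : simpl nomatch.

Lemma fibSS n : fib n.+2 = (fib n.+1 + fib n)%N. Proof. by []. Qed.

Lemma fib_add m n : fib (m + n).+1 = (fib m.+1 * fib n.+1 + fib m * fib n)%N.
Proof.
elim: m n => [|m IHm] n; first by rewrite add0n mul1n mul0n addn0.
by rewrite addSnnS IHm !fibSS; lia.
Qed.

Lemma fib_gt0 n : (0 < fib n.+1)%N.
Proof. by elim: n => [//|n IHn]; rewrite fibSS; lia. Qed.

Lemma fib_neq0 n : (fib n.+1)%:R != 0 :> rat.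
Proof. by rewrite pnatr_eq0 -lt0n fib_gt0. Qed.

Lemma fib_docagne (R : comNzRingType) i d :
  (fib i)%:R * (fib (i + d).+1)%:R - (fib i.+1)%:R * (fib (i + d))%:R
  = (-1) ^+ i.+1 * (fib d)%:R :> R.
Proof.
elim: i => [|i IHi]; first by rewrite mul0r mul1r sub0r add0n expr1 mulN1r.
by rewrite addSn !fibSS !natrD exprS mulN1r mulNr -IHi; ring.
Qed.

Lemma fib_cauchy_factor (R : comNzRingType) b i j : (i <= j)%N ->
  ((fib i)%:R * (fib j.+1)%:R - (fib i.+1)%:R * (fib j)%:R) *
  ((fib (b.+1 + i))%:R * (fib (b + j))%:R - (fib (b + i))%:R * (fib (b.+1 + j))%:R)
  = (-1) ^+ b.+1 * (fib (j - i))%:R ^+ 2 :> R.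
Proof.
move=> le_ij; have -> : j = (i + (j - i))%N by lia.
rewrite addKn !addSn addnA fib_docagne -[X in _ * X]opprB fib_docagne.
by rewrite !exprS exprD -signr_odd; case: (odd i); ring.
Qed.

Lemma prod_fib_neq0 k : \prod_(1 <= i < k.+1) (fib i)%:R != 0 :> rat.
Proof.
by rewrite prodf_seq_neq0; apply/allP => -[|i]; rewrite ?fib_neq0 ?mem_index_iota.
Qed.

Lemma fibonomialE n k : fibonomial n k =
  \prod_(1 <= i < k.+1) (fib (n - i + 1))%:R / \prod_(1 <= i < k.+1) (fib i)%:R.
Proof. exact: prodf_div. Qed.

Lemma fibonomialnn n : fibonomial n n = 1.
Proof.
rewrite fibonomialE big_nat_rev add1n -[RHS](divff (prod_fib_neq0 n)).
by congr (_ / _); apply: eq_big_nat => i /andP [? ?]; congr (fib _)%:R; lia.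
Qed.

Lemma fibonomialS n k : (k < n)%N -> fibonomial n.+1 k.+1 =
  (fib (n - k).+1)%:R * fibonomial n k + (fib k)%:R * fibonomial n k.+1.
Proof.
move=> lt_kn; rewrite !fibonomialE.
set P := \prod_(1 <= i < k.+1) (fib (n - i + 1))%:R.
rewrite big_nat_recl // [in X in _ = _ + X]big_nat_recr // -/P.
rewrite [\prod_(1 <= i < k.+2) (fib i)%:R]big_nat_recr //= subn1 addn1 /=.
have -> : fib n.+1 = (fib k.+1 * fib (n - k).+1 + fib k * fib (n - k))%N.
  by rewrite -fib_add; congr fib; lia.
have -> : (n - k.+1 + 1 = n - k)%N by lia.
rewrite natrD !natrM; field.
by rewrite prod_fib_neq0 fib_neq0.
Qed.

Fixpoint fibC (n k : nat) : nat :=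
  match n, k with
  | _, 0 => 1
  | 0, _.+1 => 0
  | n'.+1, k'.+1 => fib (n' - k').+1 * fibC n' k' + fib k' * fibC n' k'.+1
  end.

Lemma fibC_small n k : (n < k)%N -> fibC n k = 0%N.
Proof. by elim: n k => [|n IHn] [|k] //= lt_nk; rewrite !IHn //; lia. Qed.

Lemma fibCnn n : fibC n n = 1%N.
Proof. by elim: n => [//|n IHn] /=; rewrite subnn IHn fibC_small // muln0. Qed.

Lemma fibonomial_fibC n k : (k <= n)%N -> fibonomial n k = (fibC n k)%:R.
Proof.
elim: n k => [|n IHn] [|k] //; try by rewrite /fibonomial big_geq.
rewrite ltnS leq_eqVlt => /orP [/eqP ->|lt_kn]; first by rewrite fibonomialnn fibCnn.
by rewrite fibonomialS // !IHn ?(ltnW lt_kn) // natrD !natrM.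
Qed.

Lemma fibonomial_mul_prod_fib a m :
  fibonomial (a + 2 * m - 1) m * \prod_(1 <= i < m.+1) (fib i)%:R =
  \prod_(i < m) (fib (a + m + i))%:R.
Proof.
rewrite fibonomialE divfK ?prod_fib_neq0 // -prod_ord_rev1.
by apply: eq_bigr => i _; congr (fib _)%:R; have := ltn_ord i; lia.
Qed.

Definition fib_hankel_denom (a n : nat) : rat :=
  (-1) ^+ (a * 'C(n.+1, 2)) * (fib a)%:R *
  \prod_(1 <= k < n.+1) ((fib (a + 2 * k))%:R * fibonomial (a + 2 * k - 1) k ^+ 2).

Lemma fib_hankel_denomS a n : fib_hankel_denom a n.+1 = fib_hankel_denom a n *
  ((-1) ^+ (a * n.+1) *
   ((fib (a + 2 * n.+1))%:R * fibonomial (a + 2 * n.+1 - 1) n.+1 ^+ 2)).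
Proof. by rewrite /fib_hankel_denom big_nat_recr //= binS bin1 mulnDr exprD; ring. Qed.

Lemma fib_hankel_row a m :
  (-1) ^+ (a * m) * ((fib (a + 2 * m))%:R * fibonomial (a + 2 * m - 1) m ^+ 2) *
  \prod_(i < m) ((-1) ^+ a * (fib (m - i))%:R ^+ 2) =
  (fib (a + 2 * m))%:R * (\prod_(i < m) (fib (a + m + i))%:R) ^+ 2.
Proof.
rewrite prodrMl card_ord -exprM prodrXl (prod_ord_rev1 _ _ (fun k => (fib k)%:R)).
by rewrite -fibonomial_mul_prod_fib -signr_odd; case: (odd _); ring.
Qed.

Lemma fib_hankel_denom_mul a n :
  fib_hankel_denom a n *
    \prod_(j < n.+1) \prod_(i < j) ((-1) ^+ a * (fib (j - i))%:R ^+ 2) =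
  \prod_(i < n.+1) \prod_(j < n.+1) (fib (a + i + j))%:R.
Proof.
elim: n => [|n IHn].
  rewrite /fib_hankel_denom big_geq // !big_ord1 big_ord0 bin_small //.
  by rewrite muln0 !mulr1 mul1r !addn0.
rewrite fib_hankel_denomS
  (prod_triangle_recr _ _ (fun i j => (-1) ^+ a * (fib (j - i))%:R ^+ 2))
  (prod_square_recr _ _ (fun i j => (fib (a + i + j))%:R)) -IHn.
rewrite mulrACA fib_hankel_row -[RHS]mulrA; congr (_ * _).
under [X in _ = X * _]eq_bigr => i _ do rewrite addnAC.
by rewrite (_ : a + n.+1 + n.+1 = a + 2 * n.+1)%N; [ring | lia].
Qed.

Lemma fib_cauchy_entry b i j :
  (fib i.+1 * fib (b.+1 + j) + fib i * fib (b + j))%N = fib (b.+1 + i + j).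
Proof. by rewrite (_ : b.+1 + i + j = (i + (b + j)).+1)%N ?fib_add //; lia. Qed.

Lemma det_fib_hankel b n :
  \det (\matrix_(i < n.+1, j < n.+1) ((fib (b.+1 + i + j))%:R : rat)^-1) =
  (fib_hankel_denom b.+1 n)^-1.
Proof.
pose p i := (fib i.+1)%:R : rat; pose q j := (fib (b.+1 + j))%:R : rat.
pose r i := (fib i)%:R : rat; pose s j := (fib (b + j))%:R : rat.
have entryE i j : p i * q j + r i * s j = (fib (b.+1 + i + j))%:R.
  by rewrite -!natrM -natrD fib_cauchy_entry.
have entry_neq0 i j : p i * q j + r i * s j != 0 by rewrite entryE !addSn fib_neq0.
under eq_mx do rewrite -entryE.
rewrite det_cauchy //.
under eq_bigr => j _ do under eq_bigr => i _ do
  rewrite fib_cauchy_factor ?(ltnW (ltn_ord i)) //.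
under [X in _ / X]eq_bigr => i _ do under eq_bigr => j _ do rewrite entryE.
have := fib_hankel_denom_mul b.+1 n; set T := \prod_(j < n.+1) _ => S_eq.
have T_neq0 : T != 0.
  have : \prod_(i < n.+1) \prod_(j < n.+1) (fib (b.+1 + i + j))%:R != 0 :> rat.
    by apply/prodf_neq0 => i _; apply/prodf_neq0 => j _; rewrite !addSn fib_neq0.
  by rewrite -S_eq mulf_eq0 negb_or => /andP [].
by rewrite -S_eq invfM mulrCA divff ?mulr1.
Qed.

Lemma fib_hankel_denom_int a n : exists z : int, fib_hankel_denom a n = z%:~R.
Proof.
exists ((-1) ^+ (a * 'C(n.+1, 2)) *
  (fib a * \prod_(1 <= k < n.+1) (fib (a + 2 * k) * fibC (a + 2 * k - 1) k ^ 2))%N%:R).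
rewrite rmorphM rmorphXn rmorphN1 rmorph_nat natrM natr_prod /fib_hankel_denom -mulrA.
congr (_ * (_ * _)).
apply: eq_big_nat => k /andP [k_gt0 _].
by rewrite natrM natrX fibonomial_fibC //; lia.
Qed.

Theorem corollary3p3 (alpha n : nat) (halpha : (1 <= alpha)%N) :
  let D : rat := (-1) ^+ (alpha * 'C(n.+1, 2)) * (fib alpha)%:R *
      \prod_(1 <= k < n.+1)
         ((fib (alpha + 2 * k))%:R * fibonomial (alpha + 2 * k - 1) k ^+ 2) in
  \det (\matrix_(i < n.+1, j < n.+1) ((fib (alpha + i + j))%:R : rat)^-1) = D^-1
  /\ exists z : int, D = z%:~R.
Proof.
case: alpha halpha => [//|b] _ D.
by split; [exact: det_fib_hankel | exact: fib_hankel_denom_int].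
Qed.
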